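(* For every finite alphabet $\Sigma$, $L_{\mathrm{UNIQ}}=\Sigma^*\setminus L_{\mathrm{OBST}}$.
   Context: Let $\Sigma$ be a finite alphabet and $\$\notin\Sigma$ a delimiter symbol; $\Sigma_\$=\Sigma\cup\{\$\}$. The bigram map $\Phi$ sends a string $z\in\$\Sigma^*\$$ to the vector $\Phi(z)\in\mathbb{N}^{\Sigma_\$^2}$ whose $(i,j)$ entry is the number of positions at which the two-letter string $ij$ occurs as a contiguous factor of $z$ (counting overlaps). $L_{\mathrm{UNIQ}}$ is the set of $w\in\Sigma^*$ such that the only $z\in\$\Sigma^*\$$ with $\Phi(z)=\Phi(\$w\$)$ is $z=\$w\$$ (''uniquely decodable'' strings). For $x\in\Sigma$ write $\Sigma_{\neg x}=\Sigma\setminus\{x\}$. For $x\in\Sigma$ and $a,b\in\Sigma_{\neg x}$ (with $a=b$ allowed) define $I_{x,a,b}=\Sigma^*\,a\,x\,\Sigma_{\neg a}^*\,b\,\Sigma^*$, $J_{x,a,b}=\Sigma^*\,a\,\Sigma_{\neg x}^*\,b\,\Sigma^*$ (regular-expression notation), $K_{x,a,b}=I_{x,a,b}\cap J_{x,a,b}$, and $L_{\mathrm{OBST}}=\bigcup_{x\in\Sigma}\bigcup_{a,b\in\Sigma_{\neg x}}K_{x,a,b}$. *)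

From mathcomp Require Import all_boot.
Set Implicit Arguments. Unset Strict Implicit. Unset Printing Implicit Defensive.

(* The alphabet Sigma is a finite type T; the extended alphabet Sigma_$ is
   [option T], with the delimiter $ represented by [None] (so $ is not in
   Sigma) and letters [x] represented by [Some x]. *)

Section Bigram.
Variable T : finType.

Definition delim (w : seq T) : seq (option T) :=
  None :: rcons (map Some w) None.

Definition Phi (z : seq (option T)) : {ffun option T * option T -> nat} :=
  [ffun ij => count (pred1 ij) (zip z (behead z))].

Definition L_UNIQ (w : seq T) : Prop :=
  forall w' : seq T, Phi (delim w') = Phi (delim w) -> delim w' = delim w.

Definition in_I (x a b : T) (w : seq T) : Prop :=
  exists u v m : seq T, all (fun c => c != a) v /\ w = u ++ a :: x :: v ++ b :: m.

Definition in_J (x a b : T) (w : seq T) : Prop :=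
  exists u v m : seq T, all (fun c => c != x) v /\ w = u ++ a :: v ++ b :: m.

Definition in_K (x a b : T) (w : seq T) : Prop := in_I x a b w /\ in_J x a b w.

Definition L_OBST (w : seq T) : Prop :=
  exists x a b : T, a != x /\ b != x /\ in_K x a b w.

End Bigram.

From mathcomp Require Import all_boot zify.
From Stdlib Require Import Classical.
Set Implicit Arguments. Unset Strict Implicit. Unset Printing Implicit Defensive.

(* Since Phi z
   counts the consecutive pairs of z, two delimited words have the same image
   iff their lists of bigrams are permutations of each other ([Phi_bigrams]).  In the suffix s = a x ... of delim w, let p > 0 be the
     first position of an a not followed by x.  If s had no obstruction, the
     letters of s up to p and after p would be disjoint (section
     [Separation]); the walk a y ... of delim w' then enters the letters after
     p and, following bigrams of s, never returns, although it must use the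
     bigram (a, x) ([obstruction_at_divergence]).  The obstruction found in s
     transfers back to w. *)

Section Bigrams.
Variable S : eqType.
Implicit Types (s t u v : seq S) (a b c : S).

Definition bigrams s : seq (S * S) := zip s (behead s).

Lemma size_bigrams s : size (bigrams s) = (size s).-1.
Proof. by rewrite /bigrams size2_zip size_behead ?leq_pred. Qed.

Lemma bigrams_cons2 a b s : bigrams [:: a, b & s] = (a, b) :: bigrams (b :: s).
Proof. by []. Qed.

Lemma bigrams_cat u c v : bigrams (u ++ c :: v) = bigrams (rcons u c) ++ bigrams (c :: v).
Proof.
elim: u => [|a [|b u] IH] //.
by rewrite [_ ++ _]/= bigrams_cons2 -cat_cons IH rcons_cons bigrams_cons2.
Qed.

Lemma swap_segments U V1 Y V2 M a b :
  perm_eq (bigrams (U ++ a :: V1 ++ b :: Y ++ a :: V2 ++ b :: M))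
          (bigrams (U ++ a :: V2 ++ b :: Y ++ a :: V1 ++ b :: M)).
Proof.
rewrite !(bigrams_cat U) !(bigrams_cat (a :: _)) !(bigrams_cat (b :: _)).
rewrite ?(bigrams_cat (a :: _)).
by apply/permP => P; rewrite !count_cat; lia.
Qed.

Lemma swap_loops U V1 V2 M a :
  perm_eq (bigrams (U ++ a :: V1 ++ a :: V2 ++ a :: M))
          (bigrams (U ++ a :: V2 ++ a :: V1 ++ a :: M)).
Proof.
rewrite !(bigrams_cat U) !(bigrams_cat (a :: _)) ?(bigrams_cat (a :: _)).
by apply/permP => P; rewrite !count_cat; lia.
Qed.

Variable d : S.

Lemma bigrams_nth s i : i.+1 < size s -> (nth d s i, nth d s i.+1) \in bigrams s.
Proof.
move=> lt_is; have lt_iz : i < size (bigrams s) by rewrite size_bigrams; lia.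
by have := mem_nth (d, d) lt_iz; rewrite nth_zip_cond lt_iz nth_behead.
Qed.

Lemma bigramsP s e : e \in bigrams s ->
  exists2 i, i.+1 < size s & e = (nth d s i, nth d s i.+1).
Proof.
case/(nthP (d, d)) => i lt_iz <-; rewrite nth_zip_cond lt_iz nth_behead.
by exists i => //; move: lt_iz; rewrite size_bigrams; lia.
Qed.

Lemma bigram_walk_closed (C : S -> Prop) s t i :
    {subset bigrams t <= bigrams s} ->
    (forall e f : S, (e, f) \in bigrams s -> C e -> C f) ->
  C (nth d t i) -> forall m, i <= m -> m < size t -> C (nth d t m).
Proof.
move=> sub_ts closedC Ci; elim=> [|m IH]; first by rewrite leqn0 => /eqP <-.
rewrite leq_eqVlt => /orP [/eqP <- // | lt_im lt_mt].
apply: (closedC (nth d t m)); first by apply/sub_ts/bigrams_nth.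
by apply: IH; lia.
Qed.

End Bigrams.

Lemma first_difference (S : eqType) (c : S) s t : size s = size t -> c :: s != c :: t ->
  exists P a x y R R', [/\ c :: s = P ++ a :: x :: R, c :: t = P ++ a :: y :: R' & x != y].
Proof.
elim: s c t => [|e s IH] c [|e' t] //=; first by rewrite eqxx.
case=> size_st; case: (eqVneq e e') => [<- neq | ee']; last by exists [::], c, e, e', s, t.
have [|P [a [x [y [R [R' [-> -> xy]]]]]]] := IH e t size_st.
  by apply: contraNneq neq => [[->]].
by exists (c :: P), a, x, y, R, R'.
Qed.

Lemma prefix_of_cat (S : eqType) (u1 r1 u2 r2 : seq S) :
  size u1 <= size u2 -> u1 ++ r1 = u2 ++ r2 -> exists t, u2 = u1 ++ t /\ r1 = t ++ r2.
Proof.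
elim: u1 u2 => [|a u1 IH] [|b u2] //= le_u.
- by move=> ->; exists [::].
- by move=> ->; exists (b :: u2).
- by case=> -> /(IH _ le_u) [t [-> ->]]; exists t.
Qed.

Lemma prefix_before_notin (S : eqType) (a : S) (s1 r1 t r : seq S) :
  a \notin s1 -> s1 ++ r1 = t ++ a :: r -> exists Y, t = s1 ++ Y /\ r1 = Y ++ a :: r.
Proof.
elim: s1 t => [|e s1 IH] [|f t] /=.
- by move=> _ ->; exists [::].
- by move=> _ ->; exists (f :: t).
- by rewrite in_cons => /norP [ea _] [eae]; rewrite eae eqxx in ea.
- by rewrite in_cons => /norP [_ /IH a_s1] [-> /a_s1 [Y [-> ->]]]; exists Y.
Qed.

Lemma split_last (S : eqType) (a : S) s : a \in s ->
  exists s1 s2, s = s1 ++ a :: s2 /\ a \notin s2.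
Proof.
elim: s => // e s IH; case: (boolP (a \in s)) => [/IH [s1 [s2 [-> a_s2]]] _ | a_s].
  by exists (e :: s1), s2.
by rewrite in_cons (negbTE a_s) orbF => /eqP <-; exists [::], s.
Qed.

Lemma head_cat_self (S : Type) (b : S) s m : head b (s ++ b :: m) = head b s.
Proof. by case: s. Qed.

Lemma swap_differs (S : eqType) (u s1 s2 r1 r2 : seq S) (a b : S) :
  head b s1 != head b s2 -> u ++ a :: s1 ++ b :: r1 != u ++ a :: s2 ++ b :: r2.
Proof.
move=> heads; rewrite eqseq_cat // eqxx eqseq_cons eqxx /=.
by apply: contraNneq heads => /(congr1 (head b)); rewrite !head_cat_self => ->.
Qed.

Lemma split_between (S : eqType) (d : S) (s : seq S) i j : i < j -> j < size s ->
  s = take i s ++ nth d s i :: [seq nth d s k | k <- iota i.+1 (j - i.+1)] ++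
      nth d s j :: drop j.+1 s.
Proof.
move=> ij js; rewrite map_nth_iota; last by lia.
rewrite -[s in LHS](cat_take_drop i) (drop_nth d); last by lia.
rewrite -[drop i.+1 s in LHS](cat_take_drop (j - i.+1)) drop_drop subnK //.
by rewrite (drop_nth d js).
Qed.

Lemma in_I_at (S : finType) (d : S) (s : seq S) i j : i.+1 < j -> j < size s ->
    (forall k, i.+1 < k -> k < j -> nth d s k != nth d s i) ->
  in_I (nth d s i.+1) (nth d s i) (nth d s j) s.
Proof.
move=> ij js mid; exists (take i s), [seq nth d s k | k <- iota i.+2 (j - i.+2)].
exists (drop j.+1 s); split.
  by apply/allP => c /mapP [k]; rewrite mem_iota => k_mid ->; apply: mid; lia.
rewrite {1}(split_between d (ltnW ij) js).
by have -> : j - i.+1 = (j - i.+2).+1 by lia.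
Qed.

Lemma in_J_at (S : finType) (d : S) (s : seq S) (X : S) i j : i < j -> j < size s ->
    (forall k, i < k -> k < j -> nth d s k != X) ->
  in_J X (nth d s i) (nth d s j) s.
Proof.
move=> ij js mid; exists (take i s), [seq nth d s k | k <- iota i.+1 (j - i.+1)].
exists (drop j.+1 s); split; last exact: split_between.
by apply/allP => c /mapP [k]; rewrite mem_iota => k_mid ->; apply: mid; lia.
Qed.

Lemma in_K_cat (S : finType) (P s : seq S) (X A B : S) :
  in_K X A B s -> in_K X A B (P ++ s).
Proof.
case=> [[u [v [m [av Es]]]] [u' [v' [m' [xv Es']]]]]; split.
  by exists (P ++ u), v, m; rewrite Es catA.
by exists (P ++ u'), v', m'; rewrite Es' catA.
Qed.

Lemma below_min (P : pred nat) m n : (forall k, P k -> m <= k) -> n < m -> ~~ P n.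
Proof. by move=> min_m; apply: contraTN => /min_m; rewrite -leqNgt. Qed.

Lemma above_max (P : pred nat) m n : (forall k, P k -> k <= m) -> m < n -> ~~ P n.
Proof. by move=> max_m; apply: contraTN => /max_m; rewrite -leqNgt. Qed.

(* The suffix s starts with a = s_0, x = s_1, and p is
   the first position p > 0 with s_p = a and s_{p+1} != x.  If s has no factor
   in any K_{X,A,B} with letters satisfying [good] (in the application: not the
   delimiter), then no letter occurs both at or before p and after p. *)
Section Separation.
Variables (S : finType) (d : S) (good : pred S) (s : seq S) (p : nat).
Local Notation a := (nth d s 0).
Local Notation x := (nth d s 1).

Hypothesis interior_good : forall i, 0 < i -> i.+1 < size s -> good (nth d s i).
Hypothesis no_obstruction : forall X A B,
  good X -> good A -> good B -> A != X -> B != X -> ~ in_K X A B s.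
Hypotheses (p_pos : 0 < p) (p_lt : p.+1 < size s).
Hypotheses (s_p : nth d s p = a) (s_p1 : nth d s p.+1 != x).
Hypothesis p_min : forall i, 0 < i -> i < p -> nth d s i = a -> nth d s i.+1 = x.

Lemma a_good : good a.
Proof. by rewrite -s_p; apply: interior_good. Qed.

Lemma x_good : good x.
Proof. by apply: interior_good => //; lia. Qed.

Lemma obstructed (X B : S) i j i' j' : good X -> good B -> a != X -> B != X ->
    i.+1 < j -> j < size s -> nth d s i = a -> nth d s i.+1 = X -> nth d s j = B ->
    (forall k, i.+1 < k -> k < j -> nth d s k != a) ->
    i' < j' -> j' < size s -> nth d s i' = a -> nth d s j' = B ->
    (forall k, i' < k -> k < j' -> nth d s k != X) ->
  False.
Proof.
move=> gX gB aX BX ij js si si1 sj midI ij' js' si' sj' midJ.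
apply: (no_obstruction gX a_good gB aX BX); split.
  by rewrite -si -si1 -sj; apply: in_I_at => // k ? ?; rewrite si; apply: midI.
by rewrite -si' -sj'; apply: in_J_at.
Qed.

(* After p, x cannot occur before an a does: otherwise s_p s_{p+1} ... x and
   the prefix a x form an obstruction for (s_{p+1}, a, x). *)
Lemma x_after_p_needs_a k : p < k -> k < size s ->
  (forall j, p < j -> j < k -> nth d s j != a) -> nth d s k != x.
Proof.
move=> pk ks no_a; apply/eqP => skx.
have pk1 : p.+1 < k.
  by rewrite ltn_neqAle pk andbT; apply: contraNneq s_p1 => ->; apply/eqP.
apply: (obstructed (X := nth d s p.+1) (B := x) (i := p) (j := k) (i' := 0) (j' := 1)) => //.
- by apply: interior_good; lia.
- exact: x_good.
- by rewrite eq_sym no_a.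
- by rewrite eq_sym.
- by move=> k' ? ?; apply: no_a; lia.
- by lia.
- by move=> k' ? ?; exfalso; lia.
Qed.

(* No a occurs after p.  Take the first a or x after p; it cannot be x, so it is
   an a, reached without x; with the first a after position 0 (preceded by
   a x) this is an obstruction for (x, a, a). *)
Lemma no_a_after_p r : p < r -> r < size s -> nth d s r != a.
Proof.
move=> pr rs; apply/negP => /eqP sra.
pose a_or_x k := [&& p < k, k < size s & (nth d s k == a) || (nth d s k == x)].
have [|r0 /and3P [pr0 r0s a_or_x_r0] r0_min] := ex_minnP (ex_intro a_or_x r _).
  by rewrite /a_or_x pr rs sra eqxx.
have no_a_or_x j : p < j -> j < r0 -> (nth d s j != a) && (nth d s j != x).
  move=> pj jr0; have := below_min r0_min jr0.
  by rewrite /a_or_x pj (ltn_trans jr0 r0s) negb_or.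
have sr0x : nth d s r0 != x.
  by apply: x_after_p_needs_a => // j pj jr0; case/andP: (no_a_or_x j pj jr0).
have sr0a : nth d s r0 = a by apply/eqP; move: a_or_x_r0; rewrite (negbTE sr0x) orbF.
have ax : a != x by rewrite -sr0a.
pose a_after_0 j := [&& 0 < j, j < size s & nth d s j == a].
have [|j1 /and3P [j1_pos j1s /eqP sj1] j1_min] := ex_minnP (ex_intro a_after_0 p _).
  by rewrite /a_after_0 p_pos s_p eqxx /=; lia.
have j1_gt1 : 1 < j1.
  by rewrite ltn_neqAle j1_pos andbT; apply: contraNneq ax => j1_1; rewrite -sj1 -j1_1.
apply: (obstructed (X := x) (B := a) (i := 0) (j := j1) (i' := p) (j' := r0)) => //.
- exact: x_good.
- exact: a_good.
- move=> k k1 kj1; have := below_min j1_min kj1.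
  by rewrite /a_after_0 (ltn_trans kj1 j1s) /=; lia.
- by move=> k pk kr0; case/andP: (no_a_or_x k pk kr0).
Qed.

Lemma no_x_after_p k : p < k -> k < size s -> nth d s k != x.
Proof. by move=> pk ks; apply: x_after_p_needs_a => // j pj jk; apply: no_a_after_p; lia. Qed.

Lemma x_follows_a i : i < p -> nth d s i = a -> nth d s i.+1 = x.
Proof. by case: i => [|i] // ip; apply: p_min. Qed.

(* The letters up to p and after p are disjoint: a letter occurring on both
   sides, preceded on the left by the last a before it (followed by x), gives an
   obstruction for (x, a, that letter). *)
Lemma prefix_suffix_disjoint i k : i <= p -> p < k -> k < size s -> nth d s i != nth d s k.
Proof.
move=> ip pk ks; apply/eqP => sik.
have ska := no_a_after_p pk ks; have skx := no_x_after_p pk ks.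
have i_gt1 : 1 < i.
  by case: i ip sik => [|[|i]] // _ sik; rewrite -sik eqxx in ska skx.
have ip' : i < p.
  by rewrite ltn_neqAle ip andbT; apply: contraNneq ska => ip_eq; rewrite -sik ip_eq s_p.
pose a_before_i j := (j < i) && (nth d s j == a).
have a_before_0 : a_before_i 0 by rewrite /a_before_i eqxx; lia.
have a_before_le j : a_before_i j -> j <= i by case/andP => /ltnW.
have [p' /andP [p'i /eqP sp'] p'_max] := ex_maxnP (ex_intro _ 0 a_before_0) a_before_le.
have sp'1 : nth d s p'.+1 = x by apply: x_follows_a => //; lia.
have p'1i : p'.+1 < i.
  by rewrite ltn_neqAle p'i andbT; apply: contraNneq skx => p1i; rewrite -sik -p1i sp'1.
have ax : a != x.
  by have := above_max p'_max (ltnSn p'); rewrite /a_before_i p'1i sp'1 eq_sym.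
apply: (obstructed (X := x) (B := nth d s k) (i := p') (j := i) (i' := p) (j' := k)) => //.
- exact: x_good.
- by rewrite -sik; apply: interior_good; lia.
- by lia.
- move=> k' p'k' k'i; have := above_max p'_max (ltnW p'k').
  by rewrite /a_before_i k'i.
- by move=> k' pk' k'k; apply: no_x_after_p; lia.
Qed.
End Separation.

(* Otherwise the letters after p would be closed under the bigrams
   of s, the walk t would stay among them from position 1 on, and the bigram
   (a, x) of s could not occur in t. *)
Lemma obstruction_at_divergence (S : finType) (d : S) (good : pred S) (s t : seq S) :
    perm_eq (bigrams s) (bigrams t) -> 1 < size s -> 1 < size t ->
    nth d s 0 = nth d t 0 -> nth d s 1 != nth d t 1 ->
    (forall i, 0 < i -> i.+1 < size s -> good (nth d s i)) ->
  exists X A B, [/\ good X, good A, good B, A != X & B != X] /\ in_K X A B s.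
Proof.
move=> same s_size t_size s0t0 s1t1 interior_good.
apply: NNPP => no_obs.
have {}no_obs X A B : good X -> good A -> good B -> A != X -> B != X -> ~ in_K X A B s.
  by move=> gX gA gB AX BX K; apply: no_obs; exists X, A, B.
have /(bigramsP d) [q q_lt [s_q s_q1]] : (nth d t 0, nth d t 1) \in bigrams s.
  by rewrite (perm_mem same); apply: bigrams_nth.
have q_pos : 0 < q by case: q s_q1 {q_lt s_q} => // t1s1; rewrite t1s1 eqxx in s1t1.
pose diverges p :=
  [&& 0 < p, p.+1 < size s, nth d s p == nth d s 0 & nth d s p.+1 != nth d s 1].
have div_q : diverges q by rewrite /diverges q_pos q_lt -s_q -s_q1 s0t0 eqxx eq_sym.
have [p /and4P [p_pos p_lt /eqP s_p s_p1] p_min] := ex_minnP (ex_intro diverges q div_q).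
have before_p i : 0 < i -> i < p -> nth d s i = nth d s 0 -> nth d s i.+1 = nth d s 1.
  move=> i_pos ip si; apply/eqP; have := below_min p_min ip.
  by rewrite /diverges i_pos si eqxx (leq_ltn_trans ip (ltnW p_lt)) /= negbK.
pose after_p e := exists k, [/\ p < k, k < size s & nth d s k = e].
have after_p_closed e f : (e, f) \in bigrams s -> after_p e -> after_p f.
  case/(bigramsP d) => i i_lt [-> ->] [k [pk ks sk]]; exists i.+1; split => //.
  rewrite ltnS leqNgt; apply/negP => ip.
  have := prefix_suffix_disjoint interior_good no_obs p_pos p_lt s_p s_p1 before_p
    (ltnW ip) pk ks.
  by rewrite sk eqxx.
have t_after_p m : 0 < m -> m < size t -> after_p (nth d t m).
  apply: (bigram_walk_closed (s := s) (t := t) (i := 1) _ after_p_closed).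
  - by move=> e; rewrite (perm_mem same).
  - by exists q.+1; split; [rewrite ltnS; exact: p_min | | rewrite -s_q1].
have /(bigramsP d) [[|m] m_lt [t_m t_m1]] : (nth d s 0, nth d s 1) \in bigrams t.
  by rewrite -(perm_mem same); apply: bigrams_nth.
  by rewrite t_m1 eqxx in s1t1.
have [k [pk ks sk]] := t_after_p m.+1 isT (ltnW m_lt).
have := no_a_after_p interior_good no_obs p_pos p_lt s_p s_p1 pk ks.
by rewrite sk t_m eqxx.
Qed.

Section Words.
Variable T : finType.
Implicit Types (w : seq T) (z : seq (option T)).

Lemma Phi_bigrams z z' : Phi z = Phi z' <-> perm_eq (bigrams z) (bigrams z').
Proof.
split=> [/ffunP Phi_eq | /permP same].
  by apply/allP => ij _; have := Phi_eq ij; rewrite !ffunE => /eqP.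
by apply/ffunP => ij; rewrite !ffunE same.
Qed.

Lemma delimK : cancel (@delim T) (pmap id).
Proof. by move=> w; rewrite /delim /= -cats1 pmap_cat cats0 (map_pK (g := Some)). Qed.

Lemma size_delim w : size (delim w) = (size w).+2.
Proof. by rewrite /delim /= size_rcons size_map. Qed.

Lemma delim_interior w i : 0 < i -> i.+1 < size (delim w) -> isSome (nth None (delim w) i).
Proof.
case: i => // i _; rewrite size_delim !ltnS => lt_iw.
rewrite /delim /= nth_rcons size_map lt_iw.
by case: w lt_iw => // e w' lt_iw; rewrite (nth_map e).
Qed.

Lemma delim_swap_segments (U V1 Y V2 M : seq T) (a b : T) :
  perm_eq (bigrams (delim (U ++ a :: V1 ++ b :: Y ++ a :: V2 ++ b :: M)))
          (bigrams (delim (U ++ a :: V2 ++ b :: Y ++ a :: V1 ++ b :: M))).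
Proof.
by rewrite /delim !(map_cat, map_cons, rcons_cat, rcons_cons); apply: (swap_segments (None :: _)).
Qed.

Lemma delim_swap_loops (U V1 V2 M : seq T) (a : T) :
  perm_eq (bigrams (delim (U ++ a :: V1 ++ a :: V2 ++ a :: M)))
          (bigrams (delim (U ++ a :: V2 ++ a :: V1 ++ a :: M))).
Proof.
by rewrite /delim !(map_cat, map_cons, rcons_cat, rcons_cons); apply: (swap_loops (None :: _)).
Qed.

Lemma pmap_avoid (c : T) (v : seq (option T)) :
  all (fun o => o != Some c) v -> all (fun e => e != c) (pmap id v).
Proof. by move=> /allP vc; apply/allP => e; rewrite mem_pmap map_id => /vc. Qed.

Lemma in_K_delim w (X A B : T) :
  in_K (Some X) (Some A) (Some B) (delim w) -> in_K X A B w.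
Proof.
case=> [[u [v [m [av Ew]]]] [u' [v' [m' [xv Ew']]]]]; split.
  exists (pmap id u), (pmap id v), (pmap id m); split; first exact: pmap_avoid.
  by rewrite -[w in LHS]delimK Ew !pmap_cat /= pmap_cat.
exists (pmap id u'), (pmap id v'), (pmap id m'); split; first exact: pmap_avoid.
by rewrite -[w in LHS]delimK Ew' !pmap_cat /= pmap_cat.
Qed.

Lemma ambiguous_obstructed w w' : Phi (delim w') = Phi (delim w) -> w' != w -> L_OBST w.
Proof.
move=> /esym/Phi_bigrams same ww'.
have size_eq : size (rcons (map Some w) None) = size (rcons (map Some w') None).
  by move/perm_size: same; rewrite !size_bigrams !size_delim !size_rcons !size_map => [[->]].
have [|P [a [x [y [R [R' [Ew Ew' xy]]]]]]] := first_difference (c := None) size_eq.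
  by rewrite -!/(delim _) (inj_eq (can_inj delimK)) eq_sym.
rewrite -/(delim w) in Ew; rewrite -/(delim w') in Ew'.
have same' : perm_eq (bigrams (a :: x :: R)) (bigrams (a :: y :: R')).
  by move: same; rewrite Ew Ew' !bigrams_cat perm_cat2l.
have interior i : 0 < i -> i.+1 < size (a :: x :: R) -> isSome (nth None (a :: x :: R) i).
  move=> i_pos /= lt_i; have := delim_interior (w := w) (i := size P + i).
  rewrite Ew nth_cat (ltnNge (size P + i)) leq_addr addKn size_cat /=.
  by apply; lia.
have [X [A [B [[+ + + AX BX] K]]]] := obstruction_at_divergence same' isT isT erefl xy interior.
case: X A B AX BX K => [X|] [A|] [B|] // AX BX K _ _ _; exists X, A, B.
split; [exact: AX | split; [exact: BX | apply: in_K_delim]].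
by rewrite Ew; apply: in_K_cat.
Qed.

Lemma not_uniq_of_bigrams w w' :
  perm_eq (bigrams (delim w)) (bigrams (delim w')) -> w' != w -> ~ L_UNIQ w.
Proof.
move=> same ww' uniq_w; apply: (negP ww'); apply/eqP/(can_inj delimK)/uniq_w.
exact/esym/Phi_bigrams.
Qed.

(* Two factors a s b of w with a not in s and different first letters can be
   exchanged (they cannot overlap), so w is not uniquely decodable. *)
Lemma two_factors_not_uniq w (a b : T) u1 s1 m1 u2 s2 m2 :
    w = u1 ++ a :: s1 ++ b :: m1 -> w = u2 ++ a :: s2 ++ b :: m2 ->
    a \notin s1 -> a \notin s2 -> head b s1 != head b s2 ->
  ~ L_UNIQ w.
Proof.
wlog le_u : u1 s1 m1 u2 s2 m2 / size u1 <= size u2.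
  move=> sym E1 E2 a_s1 a_s2 heads; case: (leqP (size u1) (size u2)) => [le_u | /ltnW le_u].
    exact: (sym u1 s1 m1 u2 s2 m2).
  by apply: (sym u2 s2 m2 u1 s1 m1) => //; rewrite eq_sym.
move=> E1 E2 a_s1 a_s2 heads.
have [[|c t] [Eu2 Er]] := prefix_of_cat le_u (etrans (esym E1) E2).
  case: Er => /(congr1 (head b)); rewrite !head_cat_self => same_head.
  by rewrite same_head eqxx in heads.
case: Er => ac Er; subst c.
have [[|c Y] [Et Em]] := prefix_before_notin a_s1 Er; subst u2.
  case: Em => ba m1_eq; subst b m1.
  apply: (not_uniq_of_bigrams (w' := u1 ++ a :: s2 ++ a :: s1 ++ a :: m2)).
    by rewrite E1 delim_swap_loops.
  by rewrite E1 swap_differs // eq_sym.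
case: Em => cb m1_eq; subst c m1.
apply: (not_uniq_of_bigrams (w' := u1 ++ a :: s2 ++ b :: Y ++ a :: s1 ++ b :: m2)).
  by rewrite E1 delim_swap_segments.
by rewrite E1 swap_differs // eq_sym.
Qed.

Lemma in_J_normal w (x a b : T) : in_J x a b w -> b != x ->
  exists u s m, [/\ w = u ++ a :: s ++ b :: m, a \notin s & head b s != x].
Proof.
case=> u [v [m [v_x ->]]] bx.
have head_ok s : all (fun c => c != x) s -> head b s != x by case: s => //= c s /andP [].
case: (boolP (a \in v)) => [/split_last [v1 [v2 [Ev a_v2]]] | a_v]; last first.
  by exists u, v, m; split => //; apply: head_ok.
exists (u ++ a :: v1), v2, m; split => //; first by rewrite Ev -catA cat_cons -catA.
by apply: head_ok; move: v_x; rewrite Ev all_cat => /andP [_ /andP [_]].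
Qed.

(* An obstruction yields two exchangeable factors a x v b and a s b. *)
Lemma obstruction_not_uniq w : L_OBST w -> ~ L_UNIQ w.
Proof.
case=> x [a [b [ax [bx [[u [v [m [v_a Ew]]]] in_J_w]]]]].
have [u2 [s2 [m2 [Ew2 a_s2 head_s2]]]] := in_J_normal in_J_w bx.
apply: (two_factors_not_uniq (s1 := x :: v) Ew Ew2) => //; last by rewrite eq_sym.
by rewrite in_cons negb_or ax; apply/negP => /(allP v_a); rewrite eqxx.
Qed.

End Words.

Unset Implicit Arguments.

Theorem theorem2 (T : finType) (w : seq T) : L_UNIQ w <-> ~ L_OBST w.
Proof.
split=> [uniq_w obstruction | no_obstruction w' Phi_eq].
  exact: obstruction_not_uniq obstruction uniq_w.
case: (eqVneq w' w) => [-> // | w'_neq_w].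
by case: no_obstruction; apply: (ambiguous_obstructed Phi_eq).
Qed.
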